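(* Let $A_J=k\langle x_1,x_2\rangle/(x_2x_1-x_1x_2-x_1^2)$ (the Jordan plane) and let $K$ be a Hopf algebra with bijective antipode such that $A_J$ is a right $K$-comodule algebra via $\rho(x_i)=x_1\otimes a_{1i}+x_2\otimes a_{2i}$ ($i=1,2$). Let ${\sf D}$ be the homological codeterminant of this coaction. Then $$a_{12}a_{11}-a_{11}a_{12}-a_{11}^2=-{\sf D},\quad a_{12}a_{21}-a_{11}a_{22}-a_{11}a_{21}=-{\sf D},$$ $$a_{22}a_{11}-a_{21}a_{12}-a_{21}a_{11}={\sf D},\quad a_{22}a_{21}-a_{21}a_{22}-a_{21}^2=0.$$
   Context: $A_J$ is a Koszul AS regular algebra of global dimension 2; its Ext-algebra $E$ (with $E_1=(A_1)^*$, dual basis $x_1^*,x_2^*$, and one-dimensional $E_2$ spanned by $\mathfrak e$) is a left $K$-comodule algebra via $\rho^!(x_i^* )=\sum_s a_{is}\otimes x_s^*$. The homological codeterminant is the grouplike ${\sf D}\in K$ with $\rho^!(\mathfrak e)={\sf D}\otimes\mathfrak e$. *)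

From HB Require Import structures.
From mathcomp Require Import all_boot all_order all_algebra.
Set Implicit Arguments. Unset Strict Implicit. Unset Printing Implicit Defensive.
Import GRing.Theory.
Local Open Scope ring_scope.

(* Indices: i1 stands for the generator x_1, i2 for x_2. *)
Definition i1 : 'I_2 := ord0.
Definition i2 : 'I_2 := ord_max.

(* Coefficients of the Jordan relation  r = x2 x1 - x1 x2 - x1^2  in the
   basis x_s x_t of V (x) V:  jrel s t = coefficient of x_s x_t in r. *)
Definition jrel (R : nzRingType) (s t : 'I_2) : R :=
  match nat_of_ord s, nat_of_ord t with
  | O, O => -1
  | O, S O => -1
  | S O, O => 1
  | _, _ => 0
  end.

(* A_J is a right K-comodule algebra via rho(x_i) = sum_s x_s (x) a_{s i}:
   rho, extended multiplicatively from the free algebra, kills the relation,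
   i.e. rho(r) = sum_{s,t} x_s x_t (x) (sum_{u,v} r_{uv} a_{su} a_{tv})
   lies in k r (x) K (the degree-2 part of the ideal tensored with K). *)
Definition jordan_rho_alg (k : fieldType) (K : algType k)
    (a : 'I_2 -> 'I_2 -> K) : Prop :=
  exists lam : K, forall s t : 'I_2,
    \sum_(u < 2) \sum_(v < 2) jrel K u v * (a s u * a t v) = jrel K s t * lam.

(* Graded vector with components in degrees 0,1,2 (degree 1 being 2-dim).
   grE k models E = A_J^! = Ext_{A_J}(k,k) with basis 1, x_1^star, x_2^star, e;
   grE K models K (x) E (coefficients in K on that basis). *)
Record grE (R : Type) := GrE { gr0 : R; gr1 : 'I_2 -> R; gr2 : R }.

(* Multiplication of E (resp. K (x) E):  x_s^star x_t^star = r_{st} e, where E_2 =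
   (V^star (x) V^star)/R^perp with the pairing <x_s^star x_t^star, x_a x_b> = d_sa d_tb,
   e being the class on which the functional f |-> f(r) equals 1. *)
Definition gr_mul (R : nzRingType) (x y : grE R) : grE R :=
  GrE (gr0 x * gr0 y)
      (fun s => gr0 x * gr1 y s + gr1 x s * gr0 y)
      (gr0 x * gr2 y + gr2 x * gr0 y
        + \sum_(s < 2) \sum_(t < 2) jrel R s t * (gr1 x s * gr1 y t)).

Definition gr_one (R : nzRingType) : grE R := GrE 1 (fun _ => 0) 0.

Definition gr_add (R : nzRingType) (x y : grE R) : grE R :=
  GrE (gr0 x + gr0 y) (fun s => gr1 x s + gr1 y s) (gr2 x + gr2 y).

Definition gr_scale (k : fieldType) (R : nzRingType) (sc : k -> R)
    (c : k) (x : grE R) : grE R :=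
  GrE (sc c * gr0 x) (fun s => sc c * gr1 x s) (sc c * gr2 x).

Definition xstar (k : fieldType) (i : 'I_2) : grE k :=
  GrE 0 (fun s => if s == i then 1 else 0) 0.
Definition etop (k : fieldType) : grE k := GrE 0 (fun _ => 0) 1.

Definition is_alg_morph (k : fieldType) (K : algType k)
    (f : grE k -> grE K) : Prop :=
  [/\ forall (c : k) x y,
        f (gr_add (gr_scale id c x) y)
        = gr_add (gr_scale (fun c => c%:A) c (f x)) (f y),
      f (gr_one k) = gr_one K
    & forall x y, f (gr_mul x y) = gr_mul (f x) (f y)].

(* D is the homological codeterminant: rho^! : E -> K (x) E is the algebra
   map with rho^!(x_i^star) = sum_s a_{is} (x) x_s^star, and rho^!(e) = D (x) e. *)
Definition is_hom_codet (k : fieldType) (K : algType k)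
    (a : 'I_2 -> 'I_2 -> K) (D : K) : Prop :=
  exists rho : grE k -> grE K,
    [/\ is_alg_morph rho,
        forall i, rho (xstar k i) = GrE 0 (fun s => a i s) 0
      & rho (etop k) = GrE 0 (fun _ => 0) D].

From HB Require Import structures.
From mathcomp Require Import all_boot all_order all_algebra.
From Stdlib Require Import FunctionalExtensionality.
Import GRing.Theory.
Local Open Scope ring_scope.

(* Applying the algebra map
   rho^! to this identity and using rho^!(x_s^star) = sum_u a_{su} (x) x_u^star,
   rho^!(e) = D (x) e, the top-degree components give, for all s, t,
        sum_{u,v} r_{uv} a_{su} a_{tv} = r_{st} D.
   The four cases (s,t) in {1,2}^2 are exactly the four claimed identities. *)

Definition gr_zero (R : nzRingType) : grE R := GrE 0 (fun _ => 0) 0.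

Lemma grE_ext (R : Type) (x y : grE R) :
  gr0 x = gr0 y -> (forall s, gr1 x s = gr1 y s) -> gr2 x = gr2 y -> x = y.
Proof.
by case: x y => [x0 x1 x2] [y0 y1 y2] /= -> /functional_extensionality -> ->.
Qed.

Lemma gr_addr0 (R : nzRingType) (x : grE R) : gr_add x (gr_zero R) = x.
Proof. by apply: grE_ext => *; rewrite /= addr0. Qed.

Section AlgMorph.
Variables (k : fieldType) (K : algType k) (rho : grE k -> grE K).
Hypothesis rho_morph : is_alg_morph rho.

(* An algebra morphism sends zero to zero: 0 = (-1) 0 + 0. *)
Lemma alg_morph0 : rho (gr_zero k) = gr_zero K.
Proof.
case: rho_morph => lin _ _.
have zeroE : gr_add (gr_scale id (-1) (gr_zero k)) (gr_zero k) = gr_zero k.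
  by apply: grE_ext => *; rewrite /= mulr0 addr0.
have := lin (-1) (gr_zero k) (gr_zero k); rewrite zeroE => rho0.
by apply: grE_ext => *; rewrite rho0 /= scaleN1r mulN1r addNr.
Qed.

Lemma alg_morphZ (c : k) (x : grE k) :
  rho (gr_scale id c x) = gr_scale (fun c => c%:A) c (rho x).
Proof.
case: rho_morph => lin _ _.
by have := lin c x (gr_zero k); rewrite alg_morph0 !gr_addr0.
Qed.

End AlgMorph.

Lemma xstar_mul (k : fieldType) (s t : 'I_2) :
  gr_mul (xstar k s) (xstar k t) = gr_scale id (jrel k s t) (etop k).
Proof.
apply: grE_ext => [|u|] /=; rewrite ?mulr0 ?mul0r ?addr0 //.
rewrite add0r mulr1 (bigD1 s) //= (bigD1 t) //= !eqxx !mulr1.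
rewrite [X in _ + X + _]big1 => [|v /negbTE ->]; last by rewrite !mulr0.
rewrite big1 ?addr0 // => u /negbTE ->.
by rewrite big1 // => v _; rewrite !mul0r mulr0.
Qed.

(* The relation coefficients are integers, hence compatible with k -> K. *)
Lemma jrel_scalar (k : fieldType) (K : algType k) (s t : 'I_2) :
  (jrel k s t)%:A = jrel K s t :> K.
Proof.
rewrite /jrel; case: s => [[|[|s]] Hs]; case: t => [[|[|t]] Ht] //=;
  by rewrite ?scale0r ?scaleN1r ?scale1r // -scaleN1r scalerN scale1r.
Qed.

(* Applying rho^! to x_s^star x_t^star = r_{st} e and comparing top components. *)
Lemma codet_relation (k : fieldType) (K : algType k)
    (a : 'I_2 -> 'I_2 -> K) (D : K) :
  is_hom_codet a D -> forall s t : 'I_2,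
  \sum_(u < 2) \sum_(v < 2) jrel K u v * (a s u * a t v) = jrel K s t * D.
Proof.
move=> [rho [rho_morph rho_xstar rho_e]] s t.
case: (rho_morph) => _ _ rho_mul.
have := f_equal (@gr2 _) (rho_mul (xstar k s) (xstar k t)).
rewrite xstar_mul (@alg_morphZ _ _ _ rho_morph) rho_e !rho_xstar /=.
by rewrite mul0r !add0r jrel_scalar => <-.
Qed.

Lemma jrel_sum (R : nzRingType) (f : 'I_2 -> 'I_2 -> R) :
  \sum_(u < 2) \sum_(v < 2) jrel R u v * f u v = f i2 i1 - f i1 i2 - f i1 i1.
Proof.
rewrite !big_ord_recr !big_ord0 /= /jrel /= !add0r.
have -> : widen_ord (leqnSn 1) ord_max = i1 :> 'I_2 by apply: val_inj.
rewrite -/i2 !mulN1r !mul1r !mul0r !addr0.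
by rewrite addrC addrA addrAC.
Qed.

Theorem lemma5p6 (k : fieldType) (K : algType k) (a : 'I_2 -> 'I_2 -> K)
    (D : K) :
  jordan_rho_alg a -> is_hom_codet a D ->
  [/\ a i1 i2 * a i1 i1 - a i1 i1 * a i1 i2 - a i1 i1 ^+ 2 = - D,
      a i1 i2 * a i2 i1 - a i1 i1 * a i2 i2 - a i1 i1 * a i2 i1 = - D,
      a i2 i2 * a i1 i1 - a i2 i1 * a i1 i2 - a i2 i1 * a i1 i1 = D
    & a i2 i2 * a i2 i1 - a i2 i1 * a i2 i2 - a i2 i1 ^+ 2 = 0].
Proof.
move=> _ codet.
have rel := @codet_relation _ _ _ _ codet.
move: (rel i1 i1) (rel i1 i2) (rel i2 i1) (rel i2 i2).
rewrite !jrel_sum /jrel /= !mulN1r mul1r mul0r !expr2.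
by move=> -> -> -> ->.
Qed.
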